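(* A point $z\in\mathbb{R}^{d\times(n+1)}$ belongs to $\bigcup_{H\in\mathcal{H}}\Delta_H$ if and only if there exists $\delta$ such that $(z,\delta)$ satisfies (Inc-1); i.e. (Inc-1) is an MILP formulation of $\{\Delta_H\}_{H\in\mathcal{H}}$. Moreover, with $F(z)=(F_1(z_1),\dots,F_d(z_d))$ for $z\in\Delta$, one has $F(\Delta_H)=H$ for each $H\in\mathcal{H}$.
   Context: Let $d,n$ be positive integers, $[k]=\{1,\dots,k\}$. Let $a\in\mathbb{R}^{d\times(n+1)}$ with $a_{i0}<\dots<a_{in}$ for each $i$. For each $i$ let $l_i\ge1$ and $0=\tau(i,0)<\tau(i,1)<\dots<\tau(i,l_i)=n$ be integers. $\mathcal{H}=\{\prod_{i=1}^d[a_{i\tau(i,t_i-1)},a_{i\tau(i,t_i)}]\mid t_i\in[l_i]\}$. $\Delta_i=\{z_i\in\mathbb{R}^{n+1}\mid1=z_{i0}\ge z_{i1}\ge\dots\ge z_{in}\ge0\}$, $\Delta=\prod_i\Delta_i$. For $H=\prod_i[a_{i\tau(i,t_i-1)},a_{i\tau(i,t_i)}]$, $\Delta_H=\{z\in\Delta\mid z_{ij}=1\text{ for }j\le\tau(i,t_i-1),\ z_{ij}=0\text{ for }j>\tau(i,t_i),\ \forall i\}$. (Inc-1) in $(z,\delta)$, $\delta=(\delta_{it})_{i\in[d],t\in[l_i-1]}$: $z_i\in\Delta_i$, $\delta_{it}\in\{0,1\}$, $z_{i\tau(i,t)}\ge\delta_{it}\ge z_{i\tau(i,t)+1}$. $F_i(z_i)=a_{i0}z_{i0}+\sum_{j=1}^n(a_{ij}-a_{i,j-1})z_{ij}$.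 *)

From mathcomp Require Import all_boot all_order all_algebra.
Set Implicit Arguments. Unset Strict Implicit. Unset Printing Implicit Defensive.
Import Order.TTheory GRing.Theory Num.Theory.
Local Open Scope ring_scope.

Section Defs.
Variables (R : realFieldType) (d n : nat).

(* entry (i, j) of a d x (n+1) matrix, with j : nat (meaningful for j <= n) *)
Definition mxat (A : 'M[R]_(d, n.+1)) (i : 'I_d) (j : nat) : R := A i (inord j).

Definition inDelta_i (z : 'M[R]_(d, n.+1)) (i : 'I_d) : Prop :=
  mxat z i 0 = 1 /\
  (forall j : nat, (j < n)%N -> mxat z i j.+1 <= mxat z i j) /\
  0 <= mxat z i n.

Definition inDelta (z : 'M[R]_(d, n.+1)) : Prop := forall i, inDelta_i z i.

(* t = (t_i)_i with t_i in [l_i] indexes the box H in \mathcal{H} *)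
Definition valid_t (l : 'I_d -> nat) (t : 'I_d -> nat) : Prop :=
  forall i, (1 <= t i <= l i)%N.

Definition inDeltaH (tau : 'I_d -> nat -> nat) (t : 'I_d -> nat)
    (z : 'M[R]_(d, n.+1)) : Prop :=
  inDelta z /\
  forall i (j : nat), (j <= n)%N ->
    ((j <= tau i (t i).-1)%N -> mxat z i j = 1) /\
    ((tau i (t i) < j)%N -> mxat z i j = 0).

Definition Inc1 (l : 'I_d -> nat) (tau : 'I_d -> nat -> nat)
    (z : 'M[R]_(d, n.+1)) (delta : 'I_d -> nat -> bool) : Prop :=
  inDelta z /\
  forall i (t : nat), (1 <= t)%N -> (t < l i)%N ->
    (delta i t)%:R <= mxat z i (tau i t) /\
    mxat z i (tau i t).+1 <= (delta i t)%:R.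

Definition inH (a : 'M[R]_(d, n.+1)) (tau : 'I_d -> nat -> nat)
    (t : 'I_d -> nat) (x : 'rV[R]_d) : Prop :=
  forall i, mxat a i (tau i (t i).-1) <= x ord0 i <= mxat a i (tau i (t i)).

Definition Fi (a z : 'M[R]_(d, n.+1)) (i : 'I_d) : R :=
  mxat a i 0 * mxat z i 0 +
  \sum_(1 <= j < n.+1) (mxat a i j - mxat a i j.-1) * mxat z i j.

Definition F (a z : 'M[R]_(d, n.+1)) : 'rV[R]_d := \row_i Fi a z i.

End Defs.

From mathcomp Require Import all_boot all_order all_algebra.
From mathcomp Require Import zify lra.
Set Implicit Arguments. Unset Strict Implicit. Unset Printing Implicit Defensive.
Import Order.TTheory GRing.Theory Num.Theory.
Local Open Scope ring_scope.

(* Everything decouples coordinatewise.  The constraints of (Inc-1) say that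
   delta_it = 1 forces z_i = 1 up to tau(i,t) and delta_it = 0 forces z_i = 0 after
   it, so t is recovered as the first index at which delta_i vanishes.  On such a row
   F_i telescopes to a_{i,tau(i,t-1)} plus the increments between the two breakpoints
   weighted by z_ij in [0,1]; this sweeps out exactly the interval
   [a_{i,tau(i,t-1)}, a_{i,tau(i,t)}], each value being attained by the row that is
   constant between the two breakpoints. *)

Section Staircase.
Variables (R : realFieldType) (N : nat).
Implicit Types (Z : nat -> R) (p q : nat).

Definition staircase Z : Prop :=
  Z 0%N = 1 /\ (forall j, (j < N)%N -> Z j.+1 <= Z j) /\ 0 <= Z N.

Definition flat_outside p q Z : Prop :=
  forall j, (j <= N)%N -> ((j <= p)%N -> Z j = 1) /\ ((q < j)%N -> Z j = 0).

Lemma eq_in_staircase Z Z' : (forall j, (j <= N)%N -> Z j = Z' j) ->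
  staircase Z -> staircase Z'.
Proof.
move=> eqZ [Z0 [Zdec ZN]]; rewrite /staircase -!eqZ //; split=> //; split=> // j ltjN.
by rewrite -!eqZ ?Zdec // ltnW.
Qed.

Lemma eq_in_flat_outside p q Z Z' : (forall j, (j <= N)%N -> Z j = Z' j) ->
  flat_outside p q Z -> flat_outside p q Z'.
Proof. by move=> eqZ flatZ j jN; rewrite -eqZ //; apply: flatZ. Qed.

Variables (Z : nat -> R) (hZ : staircase Z).

Lemma staircase_le j k : (j <= k <= N)%N -> Z k <= Z j.
Proof.
case/andP=> jk kN; have [_ [Zdec _]] := hZ.
apply: (@Order.NatMonotonyTheory.nonincn_inP _ _ [pred i | (i <= N)%N]) => //=.
- by move=> i i' _ /= i'N k' /andP[_ /ltnW/leq_trans]; apply.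
- by move=> i _ /= iN; apply: Zdec.
- exact: leq_trans jk kN.
Qed.

Lemma staircase_ge0 j : (j <= N)%N -> 0 <= Z j.
Proof.
by move=> jN; have [_ [_ ZN]] := hZ; apply: le_trans ZN _; apply: staircase_le; rewrite jN /=.
Qed.

Lemma staircase_le1 j : (j <= N)%N -> Z j <= 1.
Proof. by move=> jN; have [<- _] := hZ; apply: staircase_le. Qed.

End Staircase.

Section Breakpoints.
Variables (N l : nat) (tau : nat -> nat).
Hypotheses (tauS : forall s, (s < l)%N -> (tau s < tau s.+1)%N)
  (taul : tau l = N).

Lemma tau_ltn s s' : (s < s' <= l)%N -> (tau s < tau s')%N.
Proof.
case/andP=> ss' s'l.
apply: (@homo_ltn_in _ [pred i | (i <= l)%N] tau (fun a b => (a < b)%N)) => //=.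
- exact: ltn_trans.
- by move=> i i' _ /= i'l k /andP[_ /ltnW/leq_trans]; apply.
- by move=> i _ /= il; apply: tauS.
- exact: leq_trans (ltnW ss') s'l.
Qed.

Lemma tau_leq s s' : (s <= s' <= l)%N -> (tau s <= tau s')%N.
Proof.
case/andP; rewrite leq_eqVlt => /orP[/eqP-> //| ss' s'l].
by apply/ltnW/tau_ltn; rewrite ss'.
Qed.

Lemma tau_leq_N s : (s <= l)%N -> (tau s <= N)%N.
Proof. by move=> sl; rewrite -taul; apply: tau_leq; rewrite sl leqnn. Qed.

Lemma tau_ltn_N s : (s < l)%N -> (tau s < N)%N.
Proof. by move=> sl; rewrite -taul; apply: tau_ltn; rewrite sl leqnn. Qed.

Variable R : realFieldType.

Definition inc_constraints (Z : nat -> R) (delta : nat -> bool) : Prop :=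
  forall s, (1 <= s)%N -> (s < l)%N ->
    (delta s)%:R <= Z (tau s) /\ Z (tau s).+1 <= (delta s)%:R.

Variables (Z : nat -> R) (hZ : staircase N Z).

Lemma inc_constraints_of_flat t : (1 <= t <= l)%N ->
  flat_outside N (tau t.-1) (tau t) Z -> inc_constraints Z (fun s => (s < t)%N).
Proof.
case/andP=> t1 tl flatZ s s1 sl; have sN := tau_ltn_N sl.
have [Zs_one _] := flatZ _ (ltnW sN); have [_ ZSs_zero] := flatZ _ sN.
case: ltnP => [st | ts]; rewrite /= ?mulr1n ?mulr0n; split.
- by rewrite Zs_one //; apply: tau_leq; lia.
- exact: (staircase_le1 hZ sN).
- exact: (staircase_ge0 hZ (ltnW sN)).
- by rewrite ZSs_zero // ltnS; apply: tau_leq; lia.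
Qed.

Lemma flat_of_inc_constraints delta : tau 0%N = 0%N -> (0 < l)%N ->
  inc_constraints Z delta ->
  exists2 t, (1 <= t <= l)%N & flat_outside N (tau t.-1) (tau t) Z.
Proof.
move=> tau0 l0 hdelta.
pose stop s := ((0 < s) && ((l <= s) || ~~ delta s))%N.
have stop_l : stop l by rewrite /stop l0 leqnn.
have [t /andP[t0 t_stop] t_min] := @ex_minnP stop (ex_intro _ l stop_l).
have tl : (t <= l)%N by apply: t_min.
exists t; first by rewrite t0 tl.
move=> j jN; split=> [jt | tj]; apply/le_anti.
- rewrite (staircase_le1 hZ jN) /=.
  have [t1 | t_gt1] := leqP t 1.
    have t_eq1 : t = 1%N by lia.
    move: jt; rewrite t_eq1 tau0 leqn0 => /eqP->.
    by have [-> _] := hZ.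
  have : ~~ stop t.-1 by apply/negP => /t_min; lia.
  rewrite /stop (_ : (0 < t.-1)%N = true) /=; last by lia.
  rewrite negb_or negbK => /andP[_ delta_t1].
  have [+ _] := hdelta t.-1 ltac:(lia) ltac:(lia); rewrite delta_t1 mulr1n => one_le.
  apply: le_trans one_le _; apply: (staircase_le hZ); rewrite jt tau_leq_N //; lia.
- rewrite (staircase_ge0 hZ jN) andbT.
  have t_lt_l : (t < l)%N.
    by rewrite ltn_neqAle tl andbT; apply: contraTneq tj => ->; rewrite taul -leqNgt.
  move: t_stop; rewrite leqNgt t_lt_l /= => /negbTE delta_t.
  have [_ +] := hdelta t t0 t_lt_l; rewrite delta_t mulr0n => le_zero.
  by apply: le_trans le_zero; apply: (staircase_le hZ); rewrite tj jN.
Qed.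

End Breakpoints.

Definition ramp (R : realFieldType) (p q : nat) (lam : R) : nat -> R :=
  fun j => if (j <= p)%N then 1 else if (j <= q)%N then lam else 0.

Lemma ramp_flat (R : realFieldType) N p q (lam : R) : (p <= q)%N ->
  flat_outside N p q (ramp p q lam).
Proof.
move=> pq j _; rewrite /ramp; split=> [-> // | qj].
by rewrite leqNgt (leq_ltn_trans pq qj) /= leqNgt qj.
Qed.

Lemma ramp_staircase (R : realFieldType) N p q (lam : R) : 0 <= lam <= 1 ->
  staircase N (ramp p q lam).
Proof.
case/andP=> lam0 lam1; rewrite /staircase /ramp leq0n; split=> //; split.
  move=> j _; case: (leqP j.+1 p) => [Sjp | pSj]; first by rewrite ltnW.
  by do 3!case: leqP => * //=; rewrite ?lexx ?ler01 //; lia.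
by do 2!case: leqP => * //=; rewrite ler01.
Qed.

Section IncrementalValue.
Variables (R : realFieldType) (N : nat) (A : nat -> R).
Implicit Types (Z : nat -> R) (p q : nat).

Definition inc_value Z : R :=
  A 0%N * Z 0%N + \sum_(1 <= j < N.+1) (A j - A j.-1) * Z j.

Lemma eq_in_inc_value Z Z' : (forall j, (j <= N)%N -> Z j = Z' j) ->
  inc_value Z = inc_value Z'.
Proof.
move=> eqZ; rewrite /inc_value eqZ //; congr (_ + _).
by apply: eq_big_nat => j /andP[_ jN]; rewrite eqZ.
Qed.

Lemma sum_increments p q : (p <= q)%N ->
  \sum_(p.+1 <= j < q.+1) (A j - A j.-1) = A q - A p.
Proof. by move=> pq; rewrite big_add1 /=; apply: telescope_sumr. Qed.

Lemma inc_value_flat p q Z : (p <= q <= N)%N -> flat_outside N p q Z ->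
  inc_value Z = A p + \sum_(p.+1 <= j < q.+1) (A j - A j.-1) * Z j.
Proof.
case/andP=> pq qN flatZ.
have tail0 : \sum_(q.+1 <= j < N.+1) (A j - A j.-1) * Z j = 0.
  rewrite big_nat_cond big1 // => j /andP[/andP[qj jN] _].
  by rewrite (proj2 (flatZ j jN)) ?mulr0.
have head : \sum_(1 <= j < p.+1) (A j - A j.-1) * Z j = A p - A 0%N.
  rewrite -(sum_increments (leq0n p)) big_nat_cond [RHS]big_nat_cond.
  apply: eq_bigr => j /andP[/andP[_ jp] _].
  by rewrite (proj1 (flatZ j _)) ?mulr1 //; lia.
rewrite /inc_value (@big_cat_nat _ _ _ q.+1) // (@big_cat_nat _ _ _ p.+1 1 q.+1) //=.
rewrite tail0 head addr0 (proj1 (flatZ 0%N _)) // mulr1.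
by rewrite addrA [A 0%N + _]addrC subrK.
Qed.

Lemma inc_value_ramp p q lam : (p <= q <= N)%N ->
  inc_value (ramp p q lam) = A p + lam * (A q - A p).
Proof.
move=> pqN; have [pq _] := andP pqN.
rewrite (inc_value_flat pqN (ramp_flat _ pq)) -sum_increments // mulr_sumr.
congr (_ + _); apply: eq_big_nat => j /andP[pj jq].
by rewrite /ramp leqNgt pj /= -ltnS jq mulrC.
Qed.

Lemma inc_value_flat_onto p q x : (p <= q <= N)%N -> A p <= x <= A q ->
  exists2 lam, 0 <= lam <= 1 & inc_value (ramp p q lam) = x.
Proof.
move=> pqN /andP[px xq]; rewrite -subr_ge0 in xq.
have [D0 | D_neq0] := eqVneq (A q - A p) 0.
  exists 0; first by rewrite lexx ler01.
  rewrite inc_value_ramp // mul0r addr0; lra.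
have D_gt0 : 0 < A q - A p by rewrite lt_def D_neq0; lra.
exists ((x - A p) / (A q - A p)).
  by rewrite ler_pdivlMr ?ler_pdivrMr // mul0r mul1r; lra.
by rewrite inc_value_ramp // divfK // addrC subrK.
Qed.

Hypothesis A_nondecr : forall j, (j < N)%N -> A j <= A j.+1.

Lemma increment_ge0 j : (0 < j <= N)%N -> 0 <= A j - A j.-1.
Proof. by case/andP=> j0 jN; rewrite subr_ge0 -{2}(prednK j0) A_nondecr // prednK. Qed.

Lemma inc_value_flat_mem p q Z : (p <= q <= N)%N -> staircase N Z ->
  flat_outside N p q Z -> A p <= inc_value Z <= A q.
Proof.
move=> pqN hZ flatZ; rewrite (inc_value_flat pqN flatZ).
have [pq qN] := andP pqN.
have incr_ge0 j : (p < j <= q)%N -> 0 <= A j - A j.-1.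
  by move=> pjq; apply: increment_ge0; lia.
apply/andP; split.
  rewrite lerDl big_nat_cond; apply: sumr_ge0 => j /andP[pjq _].
  by apply: mulr_ge0; [exact: incr_ge0 | apply: (staircase_ge0 hZ); lia].
rewrite -lerBrDl -sum_increments //; apply: ler_sum_nat => j pjq.
by apply: ler_piMr; [exact: incr_ge0 | apply: (staircase_le1 hZ); lia].
Qed.

End IncrementalValue.

Section Formulation.
Variables (R : realFieldType) (d n : nat) (l : 'I_d -> nat) (tau : 'I_d -> nat -> nat).
Hypotheses (hl : forall i, (1 <= l i)%N) (htau0 : forall i, tau i 0%N = 0%N)
  (htauS : forall i (t : nat), (t < l i)%N -> (tau i t < tau i t.+1)%N)
  (htaul : forall i, tau i (l i) = n).

Lemma DeltaH_union_iff_Inc1 (z : 'M[R]_(d, n.+1)) :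
  (exists t, valid_t l t /\ inDeltaH tau t z) <-> (exists delta, Inc1 l tau z delta).
Proof.
split=> [[t [ht [hz flatz]]] | [delta [hz hdelta]]].
  have /fin_all_exists[delta hdelta] : forall i, exists delta_i : nat -> bool,
      inc_constraints (l i) (tau i) (mxat z i) delta_i.
    move=> i; exists (fun s => (s < t i)%N).
    exact: (inc_constraints_of_flat (@htauS i) (htaul i) (Z := mxat z i)
              (hz i) (ht i) (flatz i)).
  by exists delta.
have /fin_all_exists2[t ht flatz] : forall i, exists2 t_i, (1 <= t_i <= l i)%N &
    flat_outside n (tau i t_i.-1) (tau i t_i) (mxat z i).
  move=> i; exact: (flat_of_inc_constraints (@htauS i) (htaul i) (Z := mxat z i)
                      (hz i) (htau0 i) (hl i) (hdelta i)).
by exists t.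
Qed.

Variable a : 'M[R]_(d, n.+1).
Hypothesis a_nondecr : forall i j, (j < n)%N -> mxat a i j <= mxat a i j.+1.

Lemma F_image_DeltaH t : valid_t l t -> forall x : 'rV[R]_d,
  (exists z, inDeltaH tau t z /\ F a z = x) <-> inH a tau t x.
Proof.
move=> ht x.
have pqn i : (tau i (t i).-1 <= tau i (t i) <= n)%N.
  have /andP[_ til] := ht i.
  apply/andP; split; first by apply: (tau_leq (@htauS i)); lia.
  exact: (tau_leq_N (@htauS i) (htaul i)).
split=> [[z [[hz flatz] <-]] i | hx].
  rewrite mxE.
  exact: (inc_value_flat_mem (@a_nondecr i) (pqn i) (Z := mxat z i) (hz i) (flatz i)).
have /fin_all_exists2[lam hlam Flam] : forall i, exists2 lam_i : R, 0 <= lam_i <= 1 &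
    inc_value n (mxat a i) (ramp (tau i (t i).-1) (tau i (t i)) lam_i) = x ord0 i.
  by move=> i; exact: inc_value_flat_onto (pqn i) (hx i).
pose z := \matrix_(i < d, j < n.+1) ramp (tau i (t i).-1) (tau i (t i)) (lam i) j.
have zE i j : (j <= n)%N -> ramp (tau i (t i).-1) (tau i (t i)) (lam i) j = mxat z i j.
  by move=> jn; rewrite /z /mxat mxE inordK.
exists z; split; first split.
- by move=> i; apply: eq_in_staircase (zE i) (ramp_staircase _ _ _ (hlam i)).
- move=> i; apply: eq_in_flat_outside (zE i) (ramp_flat _ _); by case/andP: (pqn i).
- by apply/rowP => i; rewrite mxE -Flam; apply: eq_in_inc_value => j jn; rewrite zE.
Qed.

End Formulation.

Theorem lemma3p1 (R : realFieldType) (d n : nat)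
  (hd : (0 < d)%N) (hn : (0 < n)%N)
  (a : 'M[R]_(d, n.+1))
  (ha : forall (i : 'I_d) (j : nat), (j < n)%N -> mxat a i j < mxat a i j.+1)
  (l : 'I_d -> nat) (tau : 'I_d -> nat -> nat)
  (hl : forall i, (1 <= l i)%N)
  (htau0 : forall i, tau i 0%N = 0%N)
  (htauS : forall i (t : nat), (t < l i)%N -> (tau i t < tau i t.+1)%N)
  (htaul : forall i, tau i (l i) = n) :
  (forall z : 'M[R]_(d, n.+1),
     (exists t : 'I_d -> nat, valid_t l t /\ inDeltaH tau t z) <->
     (exists delta : 'I_d -> nat -> bool, Inc1 l tau z delta)) /\
  (forall t : 'I_d -> nat, valid_t l t ->
     forall x : 'rV[R]_d,
       (exists z : 'M[R]_(d, n.+1), inDeltaH tau t z /\ F a z = x) <->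
       inH a tau t x).
Proof.
have a_nondecr i j : (j < n)%N -> mxat a i j <= mxat a i j.+1 by move/ha/ltW.
split=> [z | t ht x].
  exact: DeltaH_union_iff_Inc1 hl htau0 htauS htaul z.
exact: (F_image_DeltaH htauS htaul a_nondecr ht x).
Qed.
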